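(* Let $t$ be a positive integer and let $G=K(n_1,\dots,n_s)$ be a complete $s$-partite graph. If $n_j\ge 2t$ for each $j=1,\dots,s$, then $\chi_t(G)=s$.
   Context: $K(n_1,\dots,n_s)$ denotes the complete $s$-partite graph whose parts have $n_1,\dots,n_s$ vertices. A map $f:V(G)\to\{1,\dots,k\}$ is a $t$-relaxed $k$-coloring if every vertex $u$ has at most $t$ neighbors $v$ with $f(v)=f(u)$; $\chi_t(G)$ is the minimum $k$ for which such a coloring exists. *)

From mathcomp Require Import all_boot.
Set Implicit Arguments. Unset Strict Implicit. Unset Printing Implicit Defensive.

(* A simple graph on a finite vertex type T is given by its adjacency relation
   adj (assumed symmetric and irreflexive where relevant). *)

Definition relaxed_coloring (T : finType) (adj : rel T) (t k : nat)
  (f : T -> 'I_k) : Prop :=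
  forall u : T, #|[set v | adj u v & f v == f u]| <= t.

Definition relaxed_colorable (T : finType) (adj : rel T) (t k : nat) : Prop :=
  exists f : T -> 'I_k, relaxed_coloring adj t f.

Definition relaxed_chromatic_number_is (T : finType) (adj : rel T) (t k : nat)
  : Prop :=
  relaxed_colorable adj t k /\
  forall k', relaxed_colorable adj t k' -> k <= k'.

(* Complete s-partite graph K(n_1,...,n_s): vertices are pairs (j, x) with
   j a part index and x : 'I_(n j); two vertices are adjacent iff they lie
   in different parts. *)
Definition Kvert (s : nat) (n : 'I_s -> nat) : finType :=
  {j : 'I_s & 'I_(n j)}.

Definition Kadj (s : nat) (n : 'I_s -> nat) : rel (Kvert n) :=
  fun u v => tag u != tag v.

From mathcomp Require Import all_boot.
Set Implicit Arguments. Unset Strict Implicit. Unset Printing Implicit Defensive.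

(* Call a colour confined if its class lies inside a single part, and a part
   served if it contains a vertex of confined colour; distinct served parts
   need distinct confined colours.  A colour class meeting two parts is
   covered by the same-coloured neighbourhoods of two of its vertices, so it
   has at most 2t vertices; as every unserved part has at least 2t vertices,
   all of unconfined colour, there are at least as many unconfined colours as
   unserved parts.  Hence s <= k, and colouring each vertex by its part shows
   that s colours suffice. *)

Lemma card_preimset_sum (T U : finType) (f : T -> U) (B : {pred U}) :
  #|[set x | f x \in B]| = \sum_(u in B) #|[set x | f x == u]|.
Proof.
rewrite -sum1_card (partition_big f B) => [|x]; last by rewrite inE.
apply: eq_bigr => u Bu; rewrite -sum1_card; apply: eq_bigl => x.
by rewrite !inE; case: eqP => [-> | _]; rewrite ?andbT ?andbF.
Qed.

Lemma card_tag_fiber (I : finType) (T_ : I -> finType) (i : I) :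
  #|[set u : {i : I & T_ i} | tag u == i]| = #|T_ i|.
Proof.
have -> : [set u : {i : I & T_ i} | tag u == i] = Tagged T_ @: [set: T_ i].
  apply/setP => -[j x]; rewrite inE /=.
  apply/eqP/imsetP => [ji | [y _ /(congr1 tag)]] //.
  by subst j; exists x.
rewrite card_imset ?cardsT //; exact: eq_from_Tagged.
Qed.

Lemma leq_card_imset_factor (T U V : finType) (f : T -> U) (g : T -> V)
    (A : {set T}) :
  {in A &, forall x y, f x = f y -> g x = g y} -> #|g @: A| <= #|f @: A|.
Proof.
move=> fg; pose h u := omap g [pick x in A | f x == u].
have gE : {in A, forall x, (Some \o g) x = (h \o f) x}.
  move=> x Ax /=; rewrite /h; case: pickP => [y /andP[Ay /eqP fy] | /(_ x)].
    by rewrite /= (fg y x).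
  by rewrite Ax eqxx.
rewrite -(card_imset _ (@Some_inj _)) -imset_comp (eq_in_imset gE) imset_comp.
exact: leq_imset_card.
Qed.

Lemma card_class_le_of_cover (T : finType) (adj : rel T) (t k : nat)
    (f : T -> 'I_k) (u w : T) :
  relaxed_coloring adj t f -> f w = f u ->
  (forall v, f v = f u -> adj u v || adj w v) ->
  #|[set v | f v == f u]| <= 2 * t.
Proof.
move=> f_relaxed fwu cover.
have sub : [set v | f v == f u] \subset
    [set v | adj u v & f v == f u] :|: [set v | adj w v & f v == f w].
  apply/subsetP => v; rewrite !inE fwu => /eqP fv.
  by rewrite fv eqxx !andbT; apply: cover.
rewrite (leq_trans (subset_leq_card sub)) // (leq_trans (leq_card_setU _ _)) //.
by rewrite mul2n -addnn leq_add.
Qed.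

Lemma tag_relaxed_coloring (s : nat) (n : 'I_s -> nat) (t : nat) :
  relaxed_coloring (@Kadj s n) t (fun v => tag v).
Proof.
move=> u; rewrite (_ : [set v | _] = set0) ?cards0 //.
by apply/setP => v; rewrite !inE /Kadj eq_sym andNb.
Qed.

Section CompleteMultipartite.

Variables (s : nat) (n : 'I_s -> nat) (t k : nat) (f : Kvert n -> 'I_k).
Hypothesis f_relaxed : relaxed_coloring (@Kadj s n) t f.

Definition confined (c : 'I_k) :=
  [forall u, forall v, (f u == c) && (f v == c) ==> (tag u == tag v)].

Definition confined_colors := [set c | confined c].

Definition served_parts := tag @: [set v | confined (f v)].

Lemma card_served_parts : #|served_parts| <= #|confined_colors|.
Proof.
apply: leq_trans (subset_leq_card (_ : f @: _ \subset confined_colors)).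
  apply: leq_card_imset_factor => u v; rewrite !inE.
  move=> /forallP/(_ u)/forallP/(_ v).
  by rewrite eqxx => + _ fvu; rewrite -fvu eqxx => /eqP.
by apply/subsetP => _ /imsetP[v + ->]; rewrite !inE.
Qed.

Lemma card_unconfined_class c :
  ~~ confined c -> #|[set v | f v == c]| <= 2 * t.
Proof.
case/forallPn => u /forallPn[w]; rewrite negb_imply.
case/andP => /andP[/eqP<- /eqP fwu] tuw.
apply: card_class_le_of_cover fwu _ => // v _; rewrite /Kadj.
by case: (eqVneq (tag u) (tag v)) tuw => //= ->; rewrite eq_sym.
Qed.

Hypothesis t_gt0 : 0 < t.
Hypothesis n_ge : forall j, 2 * t <= n j.

Lemma card_unserved_parts : #|~: served_parts| <= #|~: confined_colors|.
Proof.
have sub : [set v | tag v \in ~: served_parts]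
    \subset [set v | f v \in ~: confined_colors].
  apply/subsetP => v; rewrite !inE; apply: contra => conf_v.
  by apply/imsetP; exists v; rewrite ?inE.
rewrite -(leq_pmul2l (_ : 0 < 2 * t)) ?muln_gt0 //.
apply: leq_trans (leq_trans (subset_leq_card sub) _).
  rewrite mulnC card_preimset_sum -sum_nat_const leq_sum // => j _.
  by rewrite (card_tag_fiber (fun j => 'I_(n j))) card_ord.
rewrite mulnC card_preimset_sum -sum_nat_const leq_sum // => c.
by rewrite !inE; apply: card_unconfined_class.
Qed.

Lemma parts_le_colors : s <= k.
Proof.
rewrite -[s]card_ord -[k]card_ord.
rewrite -(cardsC served_parts) -(cardsC confined_colors).
exact: leq_add card_served_parts card_unserved_parts.
Qed.

End CompleteMultipartite.

Theorem corollary2p3 (t s : nat) (n : 'I_s -> nat) :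
  0 < t ->
  (forall j : 'I_s, 2 * t <= n j) ->
  relaxed_chromatic_number_is (@Kadj s n) t s.
Proof.
move=> t_gt0 n_ge; split.
  by exists (fun v => tag v); apply: tag_relaxed_coloring.
by move=> k [f f_relaxed]; apply: parts_le_colors f_relaxed t_gt0 n_ge.
Qed.
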